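(* Let $K$ and $K_1,\dots,K_N$ be knots in $S^3$ with groups $\pi=\pi_1(S^3\setminus K)$, $\pi_i=\pi_1(S^3\setminus K_i)$ and standard meridian–longitude pairs $(m,l)$, $(m_i,l_i)$. Suppose each $K_i$ satisfies the Brumfiel–Hilden condition and that for each $i$ there is a surjective group homomorphism $f_i:\pi_i\to\pi$ with $f_i(m_i)=m$ and $f_i(l_i)=l^{d_i}$ for some $d_i\in\mathbb{Z}$. If the integers $d_1,\dots,d_N$ generate $\mathbb{Z}$ as a group, then $K$ satisfies the Brumfiel–Hilden condition.
   Context: For a group $\pi$, the Brumfiel–Hilden algebra is $H[\pi]:=\mathbb{C}[\pi]/I$, where $I$ is the two-sided ideal of the group algebra generated by all elements $g(h+h^{-1})-(h+h^{-1})g$ with $g,h\in\pi$. $H^+[\pi]\subset H[\pi]$ is the subalgebra generated by the images of all $g+g^{-1}$, $g\in\pi$. For an element $X\in H[\pi]$ which is the image of a group element, $H^+[\pi][X^{\pm1}]$ denotes the subalgebra of $H[\pi]$ generated by $H^+[\pi]$, $X$ and $X^{-1}$. A knot $K\subset S^3$ with group $\pi=\pi_1(S^3\setminus K)$ and standard (commuting) meridian $m$ and longitude $l$ is said to satisfy the Brumfiel–Hilden condition if the image $Y$ of $l$ in $H[\pi]$ lies in $H^+[\pi][X^{\pm1}]$, where $X$ is the image of $m$. *)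

From HB Require Import structures.
From mathcomp Require Import all_boot all_order all_algebra.
Set Implicit Arguments. Unset Strict Implicit. Unset Printing Implicit Defensive.
Import GRing.Theory.
Local Open Scope ring_scope.

Definition zexpg (G : groupType) (x : G) (z : int) : G :=
  match z with
  | Posz n => (x ^+ n)%g
  | Negz n => (x ^- n.+1)%g
  end.

Section GroupAlgebra.
Variables (F : fieldType) (G : groupType).

(* Elements of the group algebra F[G], represented by formal finite sums
   sum_k c_k g_k; two formal sums denote the same element of F[G] iff
   they have the same coefficient function [fs_coef]. *)
Definition fsum := seq (F * G).

Definition fs_coef (s : fsum) (g : G) : F :=
  \sum_(p <- s) (if p.2 == g then p.1 else 0).

Definition fs_add (s t : fsum) : fsum := s ++ t.
Definition fs_scale (c : F) (s : fsum) : fsum := [seq (c * p.1, p.2) | p <- s].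
Definition fs_sub (s t : fsum) : fsum := s ++ fs_scale (-1) t.
Definition fs_mul (s t : fsum) : fsum :=
  [seq (p.1 * q.1, (p.2 * q.2)%g) | p <- s, q <- t].
Definition fs_one : fsum := [:: (1, 1%g)].
Definition fs_of (g : G) : fsum := [:: (1, g)].

Definition fs_sym (g : G) : fsum := fs_add (fs_of g) (fs_of (g^-1)%g).

Definition bh_gen (g h : G) : fsum :=
  fs_sub (fs_mul (fs_of g) (fs_sym h)) (fs_mul (fs_sym h) (fs_of g)).

Inductive in_bh_ideal : fsum -> Prop :=
| bhI_gen g h : in_bh_ideal (bh_gen g h)
| bhI_add x y : in_bh_ideal x -> in_bh_ideal y -> in_bh_ideal (fs_add x y)
| bhI_mull a x : in_bh_ideal x -> in_bh_ideal (fs_mul a x)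
| bhI_mulr x a : in_bh_ideal x -> in_bh_ideal (fs_mul x a)
| bhI_ext x y : in_bh_ideal x -> fs_coef x =1 fs_coef y -> in_bh_ideal y.

(* Preimage in F[G] of the subalgebra H^+[G][X^{+-1}] of H[G] = F[G]/I,
   i.e. of the subalgebra generated by the images of all g + g^-1 and of
   X = [m], X^-1 = [m^-1]:  x is in it iff the image of x in H[G] is. *)
Inductive in_Hplus_X (m : G) : fsum -> Prop :=
| HX_sym g : in_Hplus_X m (fs_sym g)
| HX_X : in_Hplus_X m (fs_of m)
| HX_Xinv : in_Hplus_X m (fs_of (m^-1)%g)
| HX_one : in_Hplus_X m fs_one
| HX_add x y : in_Hplus_X m x -> in_Hplus_X m y -> in_Hplus_X m (fs_add x y)
| HX_mul x y : in_Hplus_X m x -> in_Hplus_X m y -> in_Hplus_X m (fs_mul x y)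
| HX_scale c x : in_Hplus_X m x -> in_Hplus_X m (fs_scale c x)
| HX_modI x y : in_Hplus_X m x -> in_bh_ideal (fs_sub y x) -> in_Hplus_X m y.

(* Brumfiel--Hilden condition for (group, meridian m, longitude l):
   the image Y of l in H[G] lies in H^+[G][X^{+-1}], X the image of m. *)
Definition BH_condition (m l : G) : Prop := in_Hplus_X m (fs_of l).

End GroupAlgebra.

Definition generate_Z (N : nat) (d : 'I_N -> int) : Prop :=
  exists c : 'I_N -> int, (\sum_(i < N) c i * d i)%R = 1%R.

(** A homomorphism [h] of groups induces an algebra map of group algebras that
    sends Brumfiel-Hilden generators to Brumfiel-Hilden generators and each
    [g + g^-1] to [h g + (h g)^-1]; hence it maps the ideal [I] into [I] and
    the subalgebra [H^+[pi_i][X_i^{+-1}]] into [H^+[pi][X^{+-1}]].  So every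
    [Y^(d_i)] lies in [H^+[pi][X^{+-1}]].  The exponents [z] with [Y^z] in that
    subalgebra form a subgroup of [Z]: it is closed under products, and under
    inverses because [g^-1 = (g + g^-1) - g].  As the [d_i] generate [Z], the
    exponent [1] is among them. *)
From HB Require Import structures.
From mathcomp Require Import all_boot all_order all_algebra zify.
Set Implicit Arguments. Unset Strict Implicit. Unset Printing Implicit Defensive.
Import GRing.Theory.
Local Open Scope ring_scope.

Section GroupAlgebraFacts.
Variables (F : fieldType) (G : groupType).
Implicit Types (s t : fsum F G) (g x : G).

Lemma fs_coef_cat s t x : fs_coef (s ++ t) x = fs_coef s x + fs_coef t x.
Proof. by rewrite /fs_coef big_cat. Qed.

Lemma fs_coef_scale c s x : fs_coef (fs_scale c s) x = c * fs_coef s x.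
Proof.
rewrite /fs_coef /fs_scale big_map mulr_sumr; apply: eq_bigr => p _ /=.
by case: ifP; rewrite ?mulr0.
Qed.

Lemma fs_coef_of g x : fs_coef (fs_of F g) x = (g == x)%:R.
Proof. by rewrite /fs_coef big_seq1; case: eqP. Qed.

Lemma fs_mul_of g g' : fs_mul (fs_of F g) (fs_of F g') = fs_of F (g * g')%g.
Proof. by rewrite /fs_mul /= mulr1. Qed.

Lemma bh_ideal_coef0 s : fs_coef s =1 (fun _ => 0) -> in_bh_ideal s.
Proof.
move=> s0; have nil_ideal : in_bh_ideal ([::] : fsum F G).
  exact: (bhI_mull [::] (bhI_gen F (1 : G)%g (1 : G)%g)).
by apply: (bhI_ext nil_ideal) => x; rewrite s0 /fs_coef big_nil.
Qed.

Lemma Hplus_X_eq_coef m s t :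
  in_Hplus_X m s -> fs_coef s =1 fs_coef t -> in_Hplus_X m t.
Proof.
move=> Hs st; apply: (HX_modI Hs); apply: bh_ideal_coef0 => x.
by rewrite /fs_sub fs_coef_cat fs_coef_scale st mulN1r subrr.
Qed.

Lemma Hplus_X_ofM m g g' : in_Hplus_X m (fs_of F g) ->
  in_Hplus_X m (fs_of F g') -> in_Hplus_X m (fs_of F (g * g')%g).
Proof. by move=> Hg Hg'; rewrite -fs_mul_of; apply: HX_mul. Qed.

Lemma Hplus_X_ofV m g : in_Hplus_X m (fs_of F g) -> in_Hplus_X m (fs_of F g^-1%g).
Proof.
move=> Hg; apply: (Hplus_X_eq_coef (HX_add (HX_sym F m g) (HX_scale (-1) Hg))) => x.
by rewrite fs_coef_cat fs_coef_scale /fs_sym fs_coef_cat !fs_coef_of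
  mulN1r addrAC subrr add0r.
Qed.

End GroupAlgebraFacts.

Section IntegerPowers.
Variables (G : groupType) (l : G).

Lemma zexpgS z : zexpg l (z + 1) = (zexpg l z * l)%g.
Proof.
case: z => [n|[|n]] /=.
- by rewrite addn1 expgSr.
- by rewrite mulVg.
- by rewrite subSS subn0 [in RHS]expgS invgM mulgVK.
Qed.

Lemma zexpgB1 z : zexpg l (z - 1) = (zexpg l z * l^-1)%g.
Proof.
case: z => [[|n]|n].
- by rewrite /= mul1g.
- have -> : Posz n.+1 - 1 = Posz n by lia.
  by rewrite /= expgSr mulgK.
- have -> : Negz n - 1 = Negz n.+1 by rewrite !NegzE; lia.
  by rewrite /= [in LHS]expgS invgM.
Qed.

Lemma zexpgD a b : zexpg l (a + b) = (zexpg l a * zexpg l b)%g.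
Proof.
elim/int_ind: b => [|n IHn|n IHn].
- by rewrite addr0 /= mulg1.
- by rewrite -addn1 PoszD addrA zexpgS IHn -mulgA -zexpgS.
- have -> : a - (n.+1)%:Z = (a - n%:Z) - 1 by lia.
  by rewrite zexpgB1 IHn -mulgA -zexpgB1; congr (_ * zexpg l _)%g; lia.
Qed.

Lemma zexpgN a : zexpg l (- a) = (zexpg l a)^-1%g.
Proof. by apply/esym/mulg1_eq; rewrite -zexpgD subrr. Qed.

End IntegerPowers.

Section Exponents.
Variables (F : fieldType) (G : groupType) (m l : G).

Definition Hplus_X_exponent (z : int) : Prop := in_Hplus_X m (fs_of F (zexpg l z)).

Lemma Hplus_X_exponent0 : Hplus_X_exponent 0.
Proof. exact: HX_one. Qed.

Lemma Hplus_X_exponentD a b :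
  Hplus_X_exponent a -> Hplus_X_exponent b -> Hplus_X_exponent (a + b).
Proof. by rewrite /Hplus_X_exponent zexpgD; apply: Hplus_X_ofM. Qed.

Lemma Hplus_X_exponentN a : Hplus_X_exponent a -> Hplus_X_exponent (- a).
Proof. by rewrite /Hplus_X_exponent zexpgN; apply: Hplus_X_ofV. Qed.

Lemma Hplus_X_exponentMl k a : Hplus_X_exponent a -> Hplus_X_exponent (k * a).
Proof.
move=> Ea; elim/int_ind: k => [|n IHn|n IHn].
- by rewrite mul0r; apply: Hplus_X_exponent0.
- by rewrite intS mulrDl mul1r; apply: Hplus_X_exponentD.
- rewrite intS opprD mulrDl mulN1r.
  by apply: Hplus_X_exponentD => //; apply: Hplus_X_exponentN.
Qed.

Lemma Hplus_X_exponent_sum (I : Type) (r : seq I) (c d : I -> int) :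
  (forall i, Hplus_X_exponent (d i)) ->
  Hplus_X_exponent (\sum_(i <- r) c i * d i).
Proof.
move=> Ed; elim/big_ind: _ => [|a b|i _]; first exact: Hplus_X_exponent0.
  exact: Hplus_X_exponentD.
exact: Hplus_X_exponentMl.
Qed.

End Exponents.

Section Pushforward.
Variables (F : fieldType) (G H : groupType) (h : G -> H).
Hypothesis hM : {morph h : x y / (x * y)%g}.

Lemma hom_mulg1 : h 1%g = 1%g.
Proof. by apply: (@mulIg _ (h 1%g)); rewrite -hM !mul1g. Qed.

Lemma hom_invg g : h g^-1%g = (h g)^-1%g.
Proof. by apply/esym/mulg1_eq; rewrite -hM mulgV hom_mulg1. Qed.

Definition fs_map (s : fsum F G) : fsum F H := [seq (p.1, h p.2) | p <- s].

Lemma fs_map_cat s t : fs_map (s ++ t) = fs_map s ++ fs_map t.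
Proof. exact: map_cat. Qed.

Lemma fs_map_scale c s : fs_map (fs_scale c s) = fs_scale c (fs_map s).
Proof. by rewrite /fs_map /fs_scale -!map_comp. Qed.

Lemma fs_map_mul s t : fs_map (fs_mul s t) = fs_mul (fs_map s) (fs_map t).
Proof.
rewrite /fs_mul /fs_map; elim: s => [|p s IHs] //=.
by rewrite map_cat IHs -!map_comp; congr (_ ++ _); apply: eq_map => q /=; rewrite hM.
Qed.

Lemma fs_map_of g : fs_map (fs_of F g) = fs_of F (h g).
Proof. by []. Qed.

Lemma fs_map_sym g : fs_map (fs_sym F g) = fs_sym F (h g).
Proof. by rewrite /fs_sym /fs_add fs_map_cat !fs_map_of hom_invg. Qed.

Lemma fs_map_bh_gen g g' : fs_map (bh_gen F g g') = bh_gen F (h g) (h g').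
Proof. by rewrite /bh_gen /fs_sub fs_map_cat fs_map_scale !fs_map_mul fs_map_sym. Qed.

Lemma fs_coef_map (L : seq G) s y : uniq L -> {subset map snd s <= L} ->
  fs_coef (fs_map s) y = \sum_(g <- L | h g == y) fs_coef s g.
Proof.
move=> uL; elim: s => [|p s IHs] sL.
  by rewrite /fs_coef big_nil big1 // => g _; rewrite big_nil.
have pL : p.2 \in L := sL _ (mem_head _ _).
rewrite /fs_map map_cons /fs_coef big_cons -/(fs_coef (fs_map s) y).
rewrite IHs => [|x xs]; last by apply: sL; rewrite inE xs orbT.
under [RHS]eq_bigr => g _ do rewrite big_cons -/(fs_coef s g).
rewrite big_split /=; congr (_ + _).
rewrite big_mkcond (bigD1_seq p.2) //= eqxx big1 ?addr0 // => g /negbTE.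
by rewrite eq_sym => ->; case: ifP.
Qed.

Lemma fs_map_eq_coef s t :
  fs_coef s =1 fs_coef t -> fs_coef (fs_map s) =1 fs_coef (fs_map t).
Proof.
move=> st y; have uL := undup_uniq (map snd (s ++ t)).
rewrite !(fs_coef_map _ uL) => [|x xs|x xs].
- by apply: eq_bigr => g _; rewrite st.
1,2: by rewrite mem_undup map_cat mem_cat xs ?orbT.
Qed.

Lemma bh_ideal_map s : in_bh_ideal s -> in_bh_ideal (fs_map s).
Proof.
elim=> {s} [g g'|s t _ IHs _ IHt|a s _ IHs|s a _ IHs|s t _ IHs st].
- by rewrite fs_map_bh_gen; apply: bhI_gen.
- by rewrite /fs_add fs_map_cat; apply: bhI_add.
- by rewrite fs_map_mul; apply: bhI_mull.
- by rewrite fs_map_mul; apply: bhI_mulr.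
- exact: bhI_ext IHs (fs_map_eq_coef st).
Qed.

Lemma Hplus_X_map m s : in_Hplus_X m s -> in_Hplus_X (h m) (fs_map s).
Proof.
elim=> {s} [g||||s t _ IHs _ IHt|s t _ IHs _ IHt|c s _ IHs|s t _ IHs Ist].
- by rewrite fs_map_sym; apply: HX_sym.
- exact: HX_X.
- by rewrite fs_map_of hom_invg; apply: HX_Xinv.
- by rewrite -[fs_one F G]/(fs_of F 1%g) fs_map_of hom_mulg1; apply: HX_one.
- by rewrite /fs_add fs_map_cat; apply: HX_add.
- by rewrite fs_map_mul; apply: HX_mul.
- by rewrite fs_map_scale; apply: HX_scale.
- apply: HX_modI IHs _; move: (bh_ideal_map Ist).
  by rewrite /fs_sub fs_map_cat fs_map_scale.
Qed.

End Pushforward.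

Theorem mainTheorem5 (F : fieldType) (G : groupType) (m l : G)
  (N : nat) (Gi : 'I_N -> groupType) (mi li : forall i, Gi i)
  (f : forall i, Gi i -> G) (d : 'I_N -> int) :
  commute m l ->
  (forall i, commute (mi i) (li i)) ->
  (forall i, BH_condition F (mi i) (li i)) ->
  (forall i (x y : Gi i), f i (x * y)%g = (f i x * f i y)%g) ->
  (forall i (y : G), exists x : Gi i, f i x = y) ->
  (forall i, f i (mi i) = m) ->
  (forall i, f i (li i) = zexpg l (d i)) ->
  generate_Z d ->
  BH_condition F m l.
Proof.
move=> _ _ BH fM _ fm fl [c sum_cd].
have Ed i : Hplus_X_exponent F m l (d i).
  by move: (Hplus_X_map (fM i) (BH i)); rewrite fs_map_of fm fl.
rewrite /BH_condition -[fs_of F l]/(fs_of F (zexpg l 1)) -sum_cd.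
exact: Hplus_X_exponent_sum.
Qed.
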